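(* Let $Y$ be a complex Banach space, $U:\mathcal B(\mathcal H)\to Y$ a non-null bounded linear operator with $\|U\|<\lambda$, $1\le p<\infty$, and $Z=(\mathbb C^n,\|\cdot\|)$ a Banach space whose canonical basis is normalized $1$-unconditional. Then for every $n$, $$\frac{R_\lambda(\mathbb D,p,U)}{n}\le AP_\lambda(B_Z,p,U)\le\|Id:Z\to\ell_1^n\|\frac{R_\lambda(\mathbb D,p,U)}{n^{1/p}}.$$
   Context: $\mathcal B(\mathcal H)$: bounded operators on a complex Hilbert space; $\mathbb D$ the open unit disc. For a simply connected complete Reinhardt domain $\Omega\subset\mathbb C^k$, bounded pluriharmonic $f:\Omega\to\mathcal B(\mathcal H)$ are written $f(z)=\sum_\alpha a_\alpha z^\alpha+\sum_{|\alpha|\ge1}b_\alpha^*\bar z^\alpha$ ($b_0=0$), $\|f\|_\Omega=\sup\|f(z)\|$. $R_\lambda(\Omega,p,U)$: supremum of $r\ge0$ with $\sup_{z\in r\Omega}\sum_\alpha(\|U(a_\alpha)\|^p+\|U(b_\alpha)\|^p)|z^\alpha|^p\le\lambda^p\|f\|_\Omega^p$ for all such $f$. $AP_\lambda(\Omega,p,U)$: supremum of $\frac1k\sum_{i=1}^kr_i$ over $r\in\mathbb R^k_{\ge0}$ with $\sum_\alpha(\|U(a_\alpha)\|^p+\|U(b_\alpha)\|^p)r^{p\alpha}\le\lambda^p\|f\|_\Omega^p$ for all such $f$. $B_Z$ open unit ball of $Z$. *)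

From HB Require Import structures.
From mathcomp Require Import all_boot all_order all_algebra.
From mathcomp Require Import all_classical all_reals.
From mathcomp Require Import ereal exp.
From mathcomp Require Import complex.
Set Implicit Arguments. Unset Strict Implicit. Unset Printing Implicit Defensive.
Import Order.TTheory GRing.Theory Num.Theory.
Local Open Scope ring_scope.
Local Open Scope classical_set_scope.

Section Defs.
Variable R : realType.
Local Notation C := (R[i]).

Definition cmod (z : C) : R := Normc.normc z.

Section Hilbert.
Variables (H : lmodType C) (ip : H -> H -> C).

Definition hnorm (x : H) : R := Num.sqrt (complex.Re (ip x x)).

Record is_hilbert : Prop := {
  ip_linl : forall (a : C) x y z, ip (a *: x + y) z = a * ip x z + ip y z;
  ip_conj : forall x y, ip y x = conjc (ip x y);
  ip_pos  : forall x, x != 0 -> 0 < ip x x;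
  ip_complete : forall u : nat -> H,
      (forall e : R, 0 < e -> exists N, forall m k, (N <= m)%N -> (N <= k)%N ->
          hnorm (u m - u k) < e) ->
      exists l, forall e : R, 0 < e -> exists N, forall m, (N <= m)%N ->
          hnorm (u m - l) < e }.

Definition hlinear (T : H -> H) : Prop :=
  forall (a : C) x y, T (a *: x + y) = a *: T x + T y.
Definition hbounded (T : H -> H) : Prop :=
  exists M : R, forall x, hnorm (T x) <= M * hnorm x.
Definition BH (T : H -> H) : Prop := hlinear T /\ hbounded T.

Definition opnorm (T : H -> H) : R :=
  sup [set hnorm (T x) | x in [set x : H | hnorm x <= 1]].

Definition is_adjoint (T Ts : H -> H) : Prop :=
  forall x y, ip (Ts x) y = ip x (T y).
End Hilbert.

Record is_banach (Y : lmodType C) (ny : Y -> R) : Prop := {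
  ny_triangle : forall x y, ny (x + y) <= ny x + ny y;
  ny_scale : forall (a : C) x, ny (a *: x) = cmod a * ny x;
  ny_def : forall x, ny x = 0 -> x = 0;
  ny_complete : forall u : nat -> Y,
      (forall e : R, 0 < e -> exists N, forall m k, (N <= m)%N -> (N <= k)%N ->
          ny (u m - u k) < e) ->
      exists l, forall e : R, 0 < e -> exists N, forall m, (N <= m)%N ->
          ny (u m - l) < e }.

Section Op.
Variables (H : lmodType C) (ip : H -> H -> C) (Y : lmodType C) (ny : Y -> R).

Definition Ulinear (U : (H -> H) -> Y) : Prop :=
  forall (a : C) T S, BH ip T -> BH ip S ->
    U (fun x => a *: T x + S x) = a *: U T + U S.
Definition Ubounded (U : (H -> H) -> Y) : Prop :=
  exists M : R, forall T, BH ip T -> ny (U T) <= M * opnorm ip T.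
Definition Unonnull (U : (H -> H) -> Y) : Prop :=
  exists T, BH ip T /\ U T != 0.
Definition Unorm (U : (H -> H) -> Y) : R :=
  sup [set ny (U T) | T in [set T | BH ip T /\ opnorm ip T <= 1]].
End Op.

(* a multi-index alpha in N^k is a {ffun 'I_k -> nat}; the multi-indices with
   |alpha| < N are enumerated as the beta : {ffun 'I_k -> 'I_N} with
   \sum_i beta i < N, mapped to mi beta. *)
Definition mi k N (b : {ffun 'I_k -> 'I_N}) : {ffun 'I_k -> nat} :=
  [ffun i => nat_of_ord (b i)].
Definition mdeg k (al : {ffun 'I_k -> nat}) : nat := (\sum_(i < k) al i)%N.

Definition mono k (z : 'I_k -> C) (al : {ffun 'I_k -> nat}) : C :=
  \prod_(i < k) z i ^+ al i.
Definition cmono k (z : 'I_k -> C) (al : {ffun 'I_k -> nat}) : R :=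
  \prod_(i < k) cmod (z i) ^+ al i.
Definition rpow_mono k (r : 'I_k -> R) (p : R) (al : {ffun 'I_k -> nat}) : R :=
  \prod_(i < k) r i `^ (p * (al i)%:R).

Section Pluri.
Variables (H : lmodType C) (ip : H -> H -> C) (k : nat).
Implicit Types (a b c : {ffun 'I_k -> nat} -> H -> H) (F : ('I_k -> C) -> H -> H).

Definition psum a c (z : 'I_k -> C) (x : H) (N : nat) : H :=
  \sum_(be : {ffun 'I_k -> 'I_N} | (mdeg (mi be) < N)%N)
     (mono z (mi be) *: a (mi be) x
      + mono (fun i => conjc (z i)) (mi be) *: c (mi be) x).

(* F is the bounded pluriharmonic function
     F z = sum_alpha a_alpha z^alpha + sum_{|alpha|>=1} b_alpha^* zbar^alpha
   on Omega: coefficients in B(H), b_0 = 0, c_alpha = b_alpha^*, the series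
   converges absolutely on Omega with sum F, and F is bounded on Omega. *)
Definition pluri_bdd (Om : set ('I_k -> C)) a b c F : Prop :=
  (forall al, BH ip (a al) /\ BH ip (b al)) /\
      b [ffun=> 0%N] = (fun=> 0) /\
      (forall al, is_adjoint ip (b al) (c al)) /\
      (forall z, Om z -> exists M : R, forall N,
        \sum_(be : {ffun 'I_k -> 'I_N} | (mdeg (mi be) < N)%N)
           ((opnorm ip (a (mi be)) + opnorm ip (b (mi be))) * cmono z (mi be)) <= M) /\
      (forall z x, Om z -> forall e : R, 0 < e -> exists N0, forall N, (N0 <= N)%N ->
        hnorm ip (psum a c z x N - F z x) < e) /\
    (exists M : R, forall z x, Om z -> hnorm ip (F z x) <= M * hnorm ip x).

Definition fnorm (Om : set ('I_k -> C)) F : R :=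
  sup [set opnorm ip (F z) | z in Om].

Variables (Y : lmodType C) (ny : Y -> R) (U : (H -> H) -> Y) (p lam : R).

Definition scale_dom (r : R) (Om : set ('I_k -> C)) : set ('I_k -> C) :=
  [set (fun i => (r%:C)%C * z i) | z in Om].

Definition R_cond (Om : set ('I_k -> C)) (r : R) : Prop :=
  forall a b c F, pluri_bdd Om a b c F ->
    forall z, scale_dom r Om z -> forall N,
      \sum_(be : {ffun 'I_k -> 'I_N} | (mdeg (mi be) < N)%N)
         ((ny (U (a (mi be))) `^ p + ny (U (b (mi be))) `^ p) * cmono z (mi be) `^ p)
      <= lam `^ p * fnorm Om F `^ p.

Definition AP_cond (Om : set ('I_k -> C)) (r : 'I_k -> R) : Prop :=
  forall a b c F, pluri_bdd Om a b c F ->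
    forall N,
      \sum_(be : {ffun 'I_k -> 'I_N} | (mdeg (mi be) < N)%N)
         ((ny (U (a (mi be))) `^ p + ny (U (b (mi be))) `^ p) * rpow_mono r p (mi be))
      <= lam `^ p * fnorm Om F `^ p.

Definition R_lambda (Om : set ('I_k -> C)) : \bar R :=
  ereal_sup [set r%:E | r in [set r : R | 0 <= r /\ R_cond Om r]].

Definition AP_lambda (Om : set ('I_k -> C)) : \bar R :=
  ereal_sup [set ((k%:R)^-1 * \sum_(i < k) r i)%:E
            | r in [set r : 'I_k -> R | (forall i, 0 <= r i) /\ AP_cond Om r]].
End Pluri.

Definition unit_disc : set ('I_1 -> C) := [set z | cmod (z ord0) < 1].

Definition canon n (i : 'I_n) : 'I_n -> C := fun j => (i == j)%:R.

Record unc_norm n (nz : ('I_n -> C) -> R) : Prop := {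
  nz_triangle : forall x y, nz (fun i => x i + y i) <= nz x + nz y;
  nz_scale : forall (a : C) x, nz (fun i => a * x i) = cmod a * nz x;
  nz_def : forall x, nz x = 0 -> x = (fun=> 0);
  nz_normalized : forall i, nz (canon i) = 1;
  nz_unconditional : forall (eps x : 'I_n -> C),
      (forall i, cmod (eps i) <= 1) -> nz (fun i => eps i * x i) <= nz x }.

Definition ball_Z n (nz : ('I_n -> C) -> R) : set ('I_n -> C) := [set z | nz z < 1].

Definition id_to_l1 n (nz : ('I_n -> C) -> R) : R :=
  sup [set \sum_(i < n) cmod (x i) | x in [set x | nz x <= 1]].
End Defs.

From Pilot Require Import Defs.
From HB Require Import structures.
From mathcomp Require Import all_boot all_order all_algebra.
From mathcomp Require Import all_classical all_reals.
From mathcomp Require Import ereal exp.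
From mathcomp Require Import complex.
From mathcomp Require Import unstable convex hoelder.
From mathcomp Require Import ring lra.
Import Order.TTheory GRing.Theory Num.Theory.
Set Implicit Arguments. Unset Strict Implicit. Unset Printing Implicit Defensive.
Local Open Scope ring_scope.
Local Open Scope classical_set_scope.
Local Open Scope complex_scope.

(* For the lower bound, restrict f to a coordinate axis of B_Z: w |-> f (w e_i) is a
   bounded pluriharmonic function on the disc whose coefficients are those of f along
   that axis, so if r is admissible for the disc, every r' < r gives the admissible
   point r' e_i of B_Z, of coordinate mean r' / n.
   For the upper bound, let M = ||Id : Z -> l_1^n||.  The map z |-> (z_1 + ... + z_n) / M
   sends B_Z into the disc, so g on the disc lifts to f = g ((z_1 + ... + z_n) / M) on B_Z,
   whose coefficient of index alpha is the multinomial coefficient of alpha times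
   M^-|alpha| times the coefficient of g of degree |alpha|.  Inserting this into the
   AP inequality of f at an admissible r, the multinomial theorem together with the power
   mean inequality (mean r)^p <= mean (r_i^p) shows that M^-1 n^(1/p) (mean r) is an
   admissible radius for the disc. *)

Section Modulus.
Variable R : realType.
Local Notation C := (R[i]).

Lemma cmod_ge0 (z : C) : 0 <= cmod z.
Proof. by case: z => a b; rewrite /cmod /= sqrtr_ge0. Qed.

Lemma cmodM (x y : C) : cmod (x * y) = cmod x * cmod y.
Proof. exact: Normc.normcM. Qed.

Lemma cmod0 : cmod (0 : C) = 0.
Proof. exact: Normc.normc0. Qed.

Lemma cmodR (x : R) : cmod x%:C = `|x|.
Proof. by rewrite /cmod /= expr0n /= addr0 sqrtr_sqr. Qed.

Lemma cmodN1 : cmod (-1 : C) = 1.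
Proof. by rewrite -[-1](rmorphN1 (real_complex R)) cmodR normrN normr1. Qed.

Lemma cmod_sum (I : finType) (P : pred I) (F : I -> C) :
  cmod (\sum_(i | P i) F i) <= \sum_(i | P i) cmod (F i).
Proof.
elim/big_rec2: _ => [|i y x _ Hx]; first by rewrite cmod0.
by apply: le_trans (@le_normcD R _ _) _; rewrite lerD2l.
Qed.

Lemma mul_conjc (a : C) : a * conjc a = ((cmod a) ^+ 2)%:C.
Proof.
case: a => u v; rewrite /cmod /= sqr_sqrtr ?addr_ge0 ?sqr_ge0 //.
by simpc; congr Complex; ring.
Qed.

End Modulus.

(* [sup] of a set without upper bound is [0] by convention, hence the case split. *)
Lemma sup_ge0 (R : realType) (E : set R) : (exists2 y, E y & 0 <= y) -> 0 <= sup E.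
Proof.
move=> [y Ey y0]; case: (pselect (has_ubound E)) => [ub|nub].
  exact: le_trans y0 (sup_upper_bound (conj (ex_intro _ y Ey) ub) Ey).
by rewrite sup_out // => -[].
Qed.

Section Hilbert.
Variable R : realType.
Local Notation C := (R[i]).
Variables (H : lmodType C) (ip : H -> H -> C).
Hypothesis hH : is_hilbert ip.

Lemma ip0l z : ip 0 z = 0.
Proof.
have := ip_linl hH 1 0 0 z; rewrite scale1r addr0 mul1r => h.
by apply: (addrI (ip 0 z)); rewrite addr0 -h.
Qed.

Lemma ip_scalel a x z : ip (a *: x) z = a * ip x z.
Proof. by have := ip_linl hH a x 0 z; rewrite addr0 ip0l addr0. Qed.

Lemma ip_scaler a x y : ip x (a *: y) = conjc a * ip x y.
Proof. by rewrite (ip_conj hH) ip_scalel rmorphM /= -(ip_conj hH). Qed.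

Lemma hnorm_ge0 x : 0 <= hnorm ip x.
Proof. exact: sqrtr_ge0. Qed.

Lemma hnorm0 : hnorm ip 0 = 0.
Proof. by rewrite /hnorm ip0l sqrtr0. Qed.

Lemma hnormZ a x : hnorm ip (a *: x) = cmod a * hnorm ip x.
Proof.
rewrite /hnorm ip_scalel ip_scaler mulrA mul_conjc.
case: (ip x x) => u v; rewrite /= mul0r subr0.
by rewrite sqrtrM ?sqr_ge0 // sqrtr_sqr ger0_norm // cmod_ge0.
Qed.

Lemma hnorm_unit_ball_le (T : H -> H) M :
  (forall x, hnorm ip (T x) <= M * hnorm ip x) ->
  forall x, hnorm ip x <= 1 -> hnorm ip (T x) <= Num.max M 0.
Proof.
move=> hM x hx; apply: le_trans (hM x) _.
apply: le_trans (ler_wpM2r (hnorm_ge0 x) (_ : M <= Num.max M 0)) _.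
  by rewrite le_max lexx.
by rewrite -[leRHS]mulr1 ler_wpM2l // le_max lexx orbT.
Qed.

Lemma opnorm_ge0 (T : H -> H) : 0 <= opnorm ip T.
Proof.
apply: sup_ge0; exists (hnorm ip (T 0)); last exact: hnorm_ge0.
by exists 0 => //=; rewrite hnorm0.
Qed.

Lemma opnorm_le (T : H -> H) M :
  (forall x, hnorm ip x <= 1 -> hnorm ip (T x) <= M) -> opnorm ip T <= M.
Proof.
move=> hM; apply: ge_sup; first by exists (hnorm ip (T 0)), 0 => //=; rewrite hnorm0.
by move=> _ [x hx <-]; exact: hM.
Qed.

Lemma opnorm_ub (T : H -> H) x : BH ip T -> hnorm ip x <= 1 ->
  hnorm ip (T x) <= opnorm ip T.
Proof.
move=> [_ [M hM]] hx; apply: sup_upper_bound; last by exists x.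
split; first by exists (hnorm ip (T 0)), 0 => //=; rewrite hnorm0.
by exists (Num.max M 0) => _ [y hy <-]; exact: hnorm_unit_ball_le.
Qed.

Lemma BH_scale (T : H -> H) a : BH ip T -> BH ip (fun x => a *: T x).
Proof.
move=> [lin [M hM]]; split.
  by move=> b x y; rewrite lin scalerDr !scalerA mulrC.
exists (cmod a * M) => x; rewrite hnormZ -mulrA.
by rewrite ler_wpM2l ?cmod_ge0.
Qed.

Lemma BH0 : BH ip (fun=> 0).
Proof.
split; first by move=> a x y; rewrite scaler0 addr0.
by exists 0 => x; rewrite hnorm0 mul0r.
Qed.

Lemma opnormZ_le (T : H -> H) (k : R) : 0 <= k -> BH ip T ->
  opnorm ip (fun x => k%:C *: T x) <= k * opnorm ip T.
Proof.
move=> k0 hT; apply: opnorm_le => x hx; rewrite hnormZ cmodR ger0_norm //.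
by rewrite ler_wpM2l // opnorm_ub.
Qed.

Lemma fnorm_ge0 k (Om : set ('I_k -> C)) F : Om !=set0 -> 0 <= fnorm ip Om F.
Proof.
move=> [z hz]; apply: sup_ge0; exists (opnorm ip (F z)); first by exists z.
exact: opnorm_ge0.
Qed.

Lemma fnorm_comp_le k1 k2 (Om1 : set ('I_k1 -> C)) (Om2 : set ('I_k2 -> C))
    (e : ('I_k1 -> C) -> ('I_k2 -> C)) (F : ('I_k2 -> C) -> H -> H) M :
  Om1 !=set0 -> (forall w, Om1 w -> Om2 (e w)) ->
  (forall z x, Om2 z -> hnorm ip (F z x) <= M * hnorm ip x) ->
  fnorm ip Om1 (fun w => F (e w)) <= fnorm ip Om2 F.
Proof.
move=> [w0 hw0] he hM; apply: ge_sup; first by exists (opnorm ip (F (e w0))), w0.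
move=> _ [w hw <-]; apply: sup_upper_bound; last by exists (e w) => //; exact: he.
split; first by exists (opnorm ip (F (e w))), (e w) => //; exact: he.
exists (Num.max M 0) => _ [z hz <-]; apply: opnorm_le.
by apply: hnorm_unit_ball_le => y; exact: hM.
Qed.

Lemma fnorm_comp_powR_le k1 k2 (Om1 : set ('I_k1 -> C)) (Om2 : set ('I_k2 -> C))
    (e : ('I_k1 -> C) -> ('I_k2 -> C)) (F : ('I_k2 -> C) -> H -> H) M (lam p : R) :
  0 < p -> Om1 !=set0 -> (forall w, Om1 w -> Om2 (e w)) ->
  (forall z x, Om2 z -> hnorm ip (F z x) <= M * hnorm ip x) ->
  lam `^ p * fnorm ip Om1 (fun w => F (e w)) `^ p <= lam `^ p * fnorm ip Om2 F `^ p.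
Proof.
move=> p0 [w hw] he hM; rewrite ler_wpM2l ?powR_ge0 //.
apply: ge0_ler_powR; first exact: ltW.
- by rewrite nnegrE fnorm_ge0 //; exists w.
- by rewrite nnegrE fnorm_ge0 //; exists (e w); exact: he.
- by apply: (fnorm_comp_le _ he hM); exists w.
Qed.

End Hilbert.

Section Banach.
Variable R : realType.
Local Notation C := (R[i]).
Variables (Y : lmodType C) (ny : Y -> R).
Hypothesis hY : is_banach ny.

Lemma ny0 : ny 0 = 0.
Proof. by have := ny_scale hY 0 0; rewrite scale0r cmod0 mul0r. Qed.

Lemma nyZ_nneg (k : R) y : 0 <= k -> ny (k%:C *: y) = k * ny y.
Proof. by move=> k0; rewrite (ny_scale hY) cmodR ger0_norm. Qed.

Lemma ny_ge0 y : 0 <= ny y.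
Proof.
have nyN : ny (- y) = ny y by rewrite -scaleN1r (ny_scale hY) cmodN1 mul1r.
by have := ny_triangle hY y (- y); rewrite subrr ny0 nyN => h; lra.
Qed.

End Banach.

Section LinearOperator.
Variable R : realType.
Local Notation C := (R[i]).
Variables (H : lmodType C) (ip : H -> H -> C) (Y : lmodType C) (U : (H -> H) -> Y).
Hypotheses (hH : is_hilbert ip) (hU : Ulinear ip U).

Lemma Ulinear0 : U (fun=> 0) = 0.
Proof.
have := hU 1 (BH0 hH) (BH0 hH).
have -> : (fun x : H => 1 *: (0 : H) + 0) = fun=> 0.
  by apply: funext => x; rewrite scaler0 addr0.
rewrite scale1r => h; apply: (addrI (U (fun=> 0))); by rewrite addr0 -h.
Qed.

Lemma UlinearZ (T : H -> H) a : BH ip T -> U (fun x => a *: T x) = a *: U T.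
Proof.
move=> hT; have := hU a hT (BH0 hH); rewrite Ulinear0 addr0.
by have -> : (fun x : H => a *: T x + 0) = fun x => a *: T x
  by apply: funext => x; rewrite addr0.
Qed.

End LinearOperator.

Section MultiIndex.

Definition mi_axis n (i0 : 'I_n) (j : nat) : {ffun 'I_n -> nat} :=
  [ffun i => if i == i0 then j else 0%N].
Definition mi1 (j : nat) : {ffun 'I_1 -> nat} := [ffun=> j].

Lemma mdeg_mi_axis n (i0 : 'I_n) j : mdeg (mi_axis i0 j) = j.
Proof.
rewrite /mdeg (bigD1 i0) //= big1 ?addn0; first by rewrite ffunE eqxx.
by move=> i /negPf hi; rewrite ffunE hi.
Qed.

Lemma mi_axis1 j : mi_axis (ord0 : 'I_1) j = mi1 j.
Proof. by apply/ffunP => i; rewrite !ffunE ord1 eqxx. Qed.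

Lemma sum_mi_axis (V : nmodType) (n N : nat) (i0 : 'I_n)
    (Phi : {ffun 'I_n -> nat} -> V) :
  (forall al : {ffun 'I_n -> nat}, (exists i, i != i0 /\ al i != 0%N) -> Phi al = 0) ->
  \sum_(be : {ffun 'I_n -> 'I_N} | (mdeg (mi be) < N)%N) Phi (mi be)
  = \sum_(j < N) Phi (mi_axis i0 j).
Proof.
move=> Phi_off.
pose emb (j : 'I_N) : {ffun 'I_n -> 'I_N} :=
  [ffun i => if i == i0 then j else Ordinal (leq_ltn_trans (leq0n j) (ltn_ord j))].
have mi_emb j : mi (emb j) = mi_axis i0 j.
  by apply/ffunP => i; rewrite !ffunE; case: (i == i0).
have emb_i0 j : emb j i0 = j by rewrite ffunE eqxx.
have embI j k : (emb j == emb k) = (j == k).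
  by apply/eqP/eqP => [h|->] //; rewrite -(emb_i0 j) h emb_i0.
have off_axis (be : {ffun 'I_n -> 'I_N}) : be != emb (be i0) -> exists i, i != i0 /\ mi be i != 0%N.
  move=> NE; have /existsP [i /andP [hi hne]] :
      [exists i, (i != i0) && (be i != emb (be i0) i)].
    apply: contraNT NE => /existsPn Hbe; apply/eqP/ffunP => i.
    by move: (Hbe i); rewrite negb_and !negbK => /orP [/eqP ->|/eqP //]; rewrite emb_i0.
  exists i; split => //; rewrite ffunE; rewrite ffunE (negPf hi) in hne.
  by apply: contra hne => /eqP h; apply/eqP/val_inj.
rewrite big_mkcond /=.
transitivity (\sum_(be : {ffun 'I_n -> 'I_N}) \sum_(j < N)
                 (if be == emb j then Phi (mi be) else 0)).
  apply: eq_bigr => be _; have [/eqP E|NE] := boolP (be == emb (be i0)).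
    rewrite E mi_emb mdeg_mi_axis ltn_ord -big_mkcond.
    rewrite (eq_bigl (fun j => j == be i0)) ?big_pred1_eq // => j.
    by rewrite embI eq_sym.
  rewrite big1 => [|j _]; first by case: ifP => // _; rewrite Phi_off //; exact: off_axis.
  by case: eqP => // h; move: NE; rewrite h emb_i0 eqxx.
rewrite exchange_big /=; apply: eq_bigr => j _.
by rewrite -big_mkcond big_pred1_eq mi_emb.
Qed.

Lemma sum_mi1 (V : nmodType) (N : nat) (Phi : {ffun 'I_1 -> nat} -> V) :
  \sum_(be : {ffun 'I_1 -> 'I_N} | (mdeg (mi be) < N)%N) Phi (mi be)
  = \sum_(j < N) Phi (mi1 j).
Proof.
rewrite (@sum_mi_axis _ 1 N ord0); first by apply: eq_bigr => j _; rewrite mi_axis1.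
by move=> al [i [hi _]]; move: hi; rewrite ord1 eqxx.
Qed.

Lemma sum_mi_axis_restrict (V : nmodType) (n N : nat) (i0 : 'I_n)
    (Phi : {ffun 'I_n -> nat} -> V) :
  (forall al : {ffun 'I_n -> nat}, (exists i, i != i0 /\ al i != 0%N) -> Phi al = 0) ->
  \sum_(be : {ffun 'I_n -> 'I_N} | (mdeg (mi be) < N)%N) Phi (mi be)
  = \sum_(be : {ffun 'I_1 -> 'I_N} | (mdeg (mi be) < N)%N) Phi (mi_axis i0 (mi be ord0)).
Proof.
move=> Phi_off; rewrite (sum_mi_axis _ Phi_off) (sum_mi1 N (fun al => Phi (mi_axis i0 (al ord0)))).
by apply: eq_bigr => j _; rewrite ffunE.
Qed.

Lemma prod_mi_axis (K : comNzSemiRingType) n (i0 : 'I_n) (F : 'I_n -> nat -> K) j :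
  (forall i, F i 0%N = 1) -> \prod_(i < n) F i (mi_axis i0 j i) = F i0 j.
Proof.
move=> F0; rewrite (bigD1 i0) //= big1 ?mulr1; first by rewrite ffunE eqxx.
by move=> i hi; rewrite ffunE (negPf hi).
Qed.

Lemma prod_off_axis (K : comNzSemiRingType) n (i0 : 'I_n) (F : 'I_n -> nat -> K)
    (al : {ffun 'I_n -> nat}) :
  (forall i k, i != i0 -> k != 0%N -> F i k = 0) ->
  (exists i, i != i0 /\ al i != 0%N) -> \prod_(i < n) F i (al i) = 0.
Proof. by move=> F_off [i [hi ha]]; rewrite (bigD1 i) //= F_off ?mul0r. Qed.

Lemma prod_exprn_mi_axis (K : comNzSemiRingType) n (i0 : 'I_n) (v : 'I_n -> K) j :
  \prod_(i < n) v i ^+ mi_axis i0 j i = v i0 ^+ j.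
Proof. exact: (@prod_mi_axis _ _ _ (fun i k => v i ^+ k)). Qed.

Lemma prod_exprn_off_axis (K : comNzSemiRingType) n (i0 : 'I_n) (v : 'I_n -> K)
    (al : {ffun 'I_n -> nat}) :
  (forall i, i != i0 -> v i = 0) ->
  (exists i, i != i0 /\ al i != 0%N) -> \prod_(i < n) v i ^+ al i = 0.
Proof.
move=> v_off; apply: (@prod_off_axis _ _ _ (fun i k => v i ^+ k)) => i k hi hk.
by rewrite v_off // expr0n (negPf hk).
Qed.

Lemma sum_mi_by_deg (V : nmodType) (n N : nat) (F : {ffun 'I_n -> 'I_N} -> V) :
  \sum_(be : {ffun 'I_n -> 'I_N} | (mdeg (mi be) < N)%N) F be
  = \sum_(j < N) \sum_(be : {ffun 'I_n -> 'I_N} | mdeg (mi be) == j) F be.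
Proof.
case: N F => [|N] F; first by rewrite big_ord0 big1 // => be; rewrite ltn0.
rewrite (partition_big (fun be => inord (mdeg (mi be)) : 'I_N.+1) predT) //=.
apply: eq_bigr => j _; apply: eq_bigl => be.
case: (ltnP (mdeg (mi be)) N.+1) => h /=.
  apply/eqP/eqP => [<-|hj]; first by rewrite inordK.
  by apply/val_inj; rewrite /= inordK.
by apply/esym/negbTE; apply: contraTneq h => ->; rewrite -ltnNge ltn_ord.
Qed.

Definition mcount (n m : nat) (s : {ffun 'I_m -> 'I_n}) : {ffun 'I_n -> nat} :=
  [ffun i => #|[pred k | s k == i]|].

(* The multinomial coefficient [|al|! / al!], counted as the words with letter counts [al]. *)
Definition mcoef (n : nat) (al : {ffun 'I_n -> nat}) : nat :=
  #|[pred s : {ffun 'I_(mdeg al) -> 'I_n} | mcount s == al]|.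

Lemma mdeg_mcount n m (s : {ffun 'I_m -> 'I_n}) : mdeg (mcount s) = m.
Proof.
rewrite /mdeg -{2}(card_ord m) -sum1_card (partition_big s predT) //=.
by apply: eq_bigr => i _; rewrite ffunE -sum1_card.
Qed.

Lemma multinomial (K : comNzRingType) (n N j : nat) (x : 'I_n -> K) : (j < N)%N ->
  \sum_(be : {ffun 'I_n -> 'I_N} | mdeg (mi be) == j)
     (mcoef (mi be))%:R * \prod_(i < n) x i ^+ be i
  = (\sum_(i < n) x i) ^+ j.
Proof.
move=> hjN; rewrite -[in RHS](card_ord j) -prodr_const bigA_distr_bigA /=.
have mcount_lt (s : {ffun 'I_j -> 'I_n}) i : (mcount s i < N)%N.
  by apply: leq_ltn_trans hjN; rewrite ffunE (leq_trans (max_card _)) ?card_ord.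
pose cnt (s : {ffun 'I_j -> 'I_n}) : {ffun 'I_n -> 'I_N} :=
  [ffun i => Ordinal (mcount_lt s i)].
have mi_cnt s : mi (cnt s) = mcount s by apply/ffunP => i; rewrite !ffunE.
rewrite (partition_big cnt (fun be => mdeg (mi be) == j)); last first.
  by move=> s _; rewrite mi_cnt mdeg_mcount.
apply: eq_bigr => be /eqP hbe; symmetry.
transitivity (\sum_(s : {ffun 'I_j -> 'I_n} | cnt s == be) \prod_(i < n) x i ^+ be i).
  apply: eq_big => [s //|s /andP [_ /eqP <-]].
  rewrite (partition_big s predT) //=; apply: eq_bigr => i _.
  rewrite (eq_bigr (fun=> x i)) => [|k /eqP -> //].
  by rewrite prodr_const !ffunE /=; congr (_ ^+ _); rewrite ffunE; apply: eq_card.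
rewrite sumr_const mulr_natl; congr (_ *+ _).
rewrite /mcoef hbe; apply: eq_card => s; rewrite !inE -mi_cnt.
transitivity (cnt s == be); first by [].
apply/eqP/eqP => [<-|h] //; apply/ffunP => i; apply/val_inj.
by have := congr1 (fun f : {ffun _ -> nat} => f i) h; rewrite !ffunE /= => ->; rewrite ffunE.
Qed.

Lemma sum_mi_multinomial (K : comNzRingType) (V : lmodType K) n N (m : K)
    (y : 'I_n -> K) (Phi : nat -> V) :
  \sum_(be : {ffun 'I_n -> 'I_N} | (mdeg (mi be) < N)%N)
     ((mcoef (mi be))%:R * m ^+ (mdeg (mi be)) * \prod_(i < n) y i ^+ (mi be i))
       *: Phi (mdeg (mi be))
  = \sum_(j < N) (m * \sum_(i < n) y i) ^+ j *: Phi j.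
Proof.
rewrite sum_mi_by_deg; apply: eq_bigr => j _.
rewrite mulr_sumr -(multinomial (fun i => m * y i) (ltn_ord j)) scaler_suml.
apply: eq_bigr => be /eqP <-; rewrite -mulrA; congr ((_ * _) *: _).
rewrite /mdeg -prodrXr -big_split /=.
by apply: eq_bigr => i _; rewrite ffunE exprMn.
Qed.

Lemma sum_mi_multinomial_mul (K : comNzRingType) n N (m : K) (y : 'I_n -> K)
    (Phi : nat -> K) :
  \sum_(be : {ffun 'I_n -> 'I_N} | (mdeg (mi be) < N)%N)
     ((mcoef (mi be))%:R * m ^+ (mdeg (mi be)) * \prod_(i < n) y i ^+ (mi be i))
       * Phi (mdeg (mi be))
  = \sum_(j < N) (m * \sum_(i < n) y i) ^+ j * Phi j.
Proof. exact: (@sum_mi_multinomial K K^o). Qed.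

End MultiIndex.

Section PowerMean.
Variable R : realType.

Lemma power_mean_le (p : R) n (r : 'I_n -> R) : 1 <= p -> (forall i, 0 <= r i) ->
  n%:R * ((n%:R)^-1 * \sum_(i < n) r i) `^ p <= \sum_(i < n) r i `^ p.
Proof.
move=> p1; elim: n r => [|n IH] r r0; first by rewrite !big_ord0 mul0r.
case: n IH r r0 => [|n] IH r r0; first by rewrite !big_ord1 mul1r invr1 mul1r.
rewrite big_ord_recr [X in _ <= X]big_ord_recr /=.
set S := \sum_(i < n.+1) r (widen_ord _ i); set T := \sum_(i < n.+1) _ `^ p.
have S0 : 0 <= S by apply: sumr_ge0 => i _.
pose t : R := n.+1%:R / n.+2%:R.
have t0 : 0 <= t by rewrite divr_ge0.
have t1 : t <= 1 by rewrite ler_pdivrMr // mul1r ler_nat.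
have mean_split : n.+2%:R^-1 * (S + r ord_max)
    = t * (n.+1%:R^-1 * S) + (1 - t) * r ord_max.
  by rewrite /t -!natr1; field; rewrite !natr1 !pnatr_eq0.
have conv := @convex_powR R p p1 (Itv01 t0 t1) (n.+1%:R^-1 * S) (r ord_max).
rewrite mean_split; apply: le_trans (ler_wpM2l (ler0n _ _) (conv _ _)) _.
- by rewrite inE /= in_itv /= andbT mulr_ge0 // invr_ge0.
- by rewrite inE /= in_itv /= andbT r0.
rewrite !convRE /= mulrDr !mulrA [n.+2%:R * n.+1%:R]mulrC /t mulfK ?pnatr_eq0 //.
have -> : n.+2%:R * (1 - n.+1%:R / n.+2%:R) = 1 :> R.
  by rewrite -!natr1; field; rewrite gt_eqF //; have := ler0n R n; lra.
by rewrite mul1r lerD2r IH.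
Qed.

Lemma scaled_mean_powR_le (p m : R) n (r : 'I_n -> R) : 1 <= p -> 0 <= m ->
  (forall i, 0 <= r i) ->
  (m * (n%:R `^ p^-1 * ((n%:R)^-1 * \sum_(i < n) r i))) `^ p
  <= m `^ p * \sum_(i < n) r i `^ p.
Proof.
move=> p1 m0 r0; have p0 : 0 < p by apply: lt_le_trans p1.
have sum0 : 0 <= \sum_(i < n) r i by rewrite sumr_ge0.
rewrite powRM ?mulr_ge0 ?powR_ge0 // ler_wpM2l ?powR_ge0 //.
rewrite powRM ?powR_ge0 ?mulr_ge0 ?invr_ge0 // -powRrM mulVf ?gt_eqF // powRr1 //.
exact: power_mean_le.
Qed.

Lemma natr_le_powR (c : nat) (p : R) : 1 <= p -> (c%:R : R) <= c%:R `^ p.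
Proof.
move=> hp; case: c => [|c]; first by rewrite powR0 // gt_eqF // (lt_le_trans ltr01 hp).
by apply: le1r_powR => //; rewrite ler1n.
Qed.

Lemma powR_exprnC (x p : R) j : 0 <= x -> (x ^+ j) `^ p = (x `^ p) ^+ j.
Proof. by move=> x0; rewrite -powR_mulrn // -powRrM mulrC powRrM powR_mulrn ?powR_ge0. Qed.

End PowerMean.

Section UnconditionalNorm.
Variable R : realType.
Local Notation C := (R[i]).
Variables (n : nat) (nz : ('I_n -> C) -> R).
Hypothesis hnz : unc_norm nz.

Lemma unc_norm0 : nz (fun=> 0) = 0.
Proof.
transitivity (nz (fun i : 'I_n => (0 : C) * (fun=> 0) i)).
  by congr nz; apply: funext => i; rewrite mul0r.
by rewrite (nz_scale hnz) cmod0 mul0r.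
Qed.

Lemma unc_norm_ge0 x : 0 <= nz x.
Proof.
have := nz_triangle hnz x (fun i => -1 * x i).
rewrite (nz_scale hnz) cmodN1 mul1r.
have -> : (fun i => x i + -1 * x i) = fun=> 0 by apply: funext => i; rewrite mulN1r subrr.
by rewrite unc_norm0 => h; lra.
Qed.

Lemma cmod_canon (i j : 'I_n) : cmod (Defs.canon R i j) <= 1.
Proof.
by rewrite /Defs.canon; case: (i == j); rewrite ?cmod0 ?ler01 // /cmod Normc.normc1.
Qed.

Lemma cmod_le_unc_norm x i : cmod (x i) <= nz x.
Proof.
have := nz_unconditional hnz x (cmod_canon i).
have -> : (fun j => Defs.canon R i j * x j) = fun j => x i * Defs.canon R i j.
  apply: funext => j; rewrite /Defs.canon.
  by case: eqP => [->|_]; rewrite ?mul1r ?mulr1 ?mul0r ?mulr0.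
by rewrite (nz_scale hnz) (nz_normalized hnz) mulr1.
Qed.

Lemma id_to_l1_ub x : nz x <= 1 -> \sum_(i < n) cmod (x i) <= id_to_l1 nz.
Proof.
move=> hx; apply: sup_upper_bound; last by exists x.
split; first by exists (\sum_(i < n) cmod (x i)), x.
exists n%:R => _ [y hy <-].
apply: le_trans (ler_sum _ (fun i _ => cmod_le_unc_norm y i)) _.
by rewrite sumr_const card_ord -(mulr_natl (nz y)) -[leRHS]mulr1 ler_wpM2l.
Qed.

Lemma id_to_l1_ge1 : (0 < n)%N -> 1 <= id_to_l1 nz.
Proof.
move=> n0; pose i0 : 'I_n := Ordinal n0.
have := id_to_l1_ub (x := Defs.canon R i0); rewrite (nz_normalized hnz) lexx.
rewrite (bigD1 i0) //= big1 ?addr0 => [|i hi]; last first.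
  by rewrite /Defs.canon eq_sym (negPf hi) cmod0.
by rewrite expr1n expr0n /= addr0 sqrtr1; apply.
Qed.

Lemma sum_cmod_lt_id_to_l1 z : (0 < n)%N -> nz z < 1 ->
  \sum_(i < n) cmod (z i) < id_to_l1 nz.
Proof.
move=> n0 hz; have M1 := id_to_l1_ge1 n0; have nz0 := unc_norm_ge0 z.
pose t : R := (1 + nz z) / 2.
have t0 : 0 < t by rewrite /t; lra.
have ht : nz (fun i => (t^-1)%:C * z i) <= 1.
  rewrite (nz_scale hnz) cmodR ger0_norm; last by rewrite invr_ge0 ltW.
  by rewrite mulrC ler_pdivrMr // mul1r /t; lra.
have tV0 : 0 <= t^-1 by rewrite invr_ge0 ltW.
have := id_to_l1_ub ht; under eq_bigr do rewrite cmodM cmodR ger0_norm //.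
rewrite -mulr_sumr ler_pdivrMl // => le_sum; apply: le_lt_trans le_sum _.
by rewrite -[ltRHS]mul1r ltr_pM2r ?(lt_le_trans ltr01) // /t; lra.
Qed.

End UnconditionalNorm.

Section Monomials.
Variable R : realType.
Local Notation C := (R[i]).

Lemma cmono_ge0 k (z : 'I_k -> C) al : 0 <= cmono z al.
Proof. by apply: prodr_ge0 => i _; rewrite exprn_ge0 // cmod_ge0. Qed.

Lemma mono_ord1 (w : 'I_1 -> C) al : mono w al = w ord0 ^+ al ord0.
Proof. exact: big_ord1. Qed.

Lemma cmono_ord1 (w : 'I_1 -> C) al : cmono w al = cmod (w ord0) ^+ al ord0.
Proof. exact: big_ord1. Qed.

End Monomials.

Lemma unit_disc0 (R : realType) : unit_disc (fun=> 0 : R[i]).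
Proof. by rewrite /unit_disc /= expr0n /= addr0 sqrtr0 ltr01. Qed.

Section Restriction.
Variable R : realType.
Local Notation C := (R[i]).
Variables (n : nat) (i0 : 'I_n) (nz : ('I_n -> C) -> R).
Hypothesis hnz : unc_norm nz.

Definition axis_embed (w : 'I_1 -> C) : 'I_n -> C := fun i => w ord0 * Defs.canon R i0 i.

Lemma axis_embed_off w i : i != i0 -> axis_embed w i = 0.
Proof. by move=> hi; rewrite /axis_embed /Defs.canon eq_sym (negPf hi) mulr0. Qed.

Lemma axis_embed_i0 w : axis_embed w i0 = w ord0.
Proof. by rewrite /axis_embed /Defs.canon eqxx mulr1. Qed.

Lemma axis_embed_ball w : unit_disc w -> ball_Z nz (axis_embed w).
Proof.
by move=> hw; rewrite /ball_Z /= /axis_embed (nz_scale hnz) (nz_normalized hnz) mulr1.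
Qed.

Variables (H : lmodType C) (ip : H -> H -> C).
Hypothesis hH : is_hilbert ip.

Definition restrict_coef (a : {ffun 'I_n -> nat} -> H -> H) (al : {ffun 'I_1 -> nat}) : H -> H :=
  a (mi_axis i0 (al ord0)).

Lemma pluri_bdd_restrict a b c F :
  pluri_bdd ip (ball_Z nz) a b c F ->
  pluri_bdd ip (@unit_disc R) (restrict_coef a) (restrict_coef b) (restrict_coef c)
     (fun w => F (axis_embed w)).
Proof.
move=> [coefBH [b0 [adj [abs_conv [conv [M boundF]]]]]].
have conj_off w i : i != i0 -> conjc (axis_embed w i) = 0.
  by move=> hi; rewrite axis_embed_off // conjc0.
have mi_axis0 : mi_axis i0 0 = [ffun=> 0%N].
  by apply/ffunP => i; rewrite !ffunE; case: (i == i0).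
split; first by move=> al; exact: coefBH.
split; first by rewrite /restrict_coef ffunE mi_axis0.
split; first by move=> al; exact: adj.
split.
  move=> w hw; have [Ma hMa] := abs_conv _ (axis_embed_ball hw); exists Ma => N.
  apply: le_trans (hMa N); rewrite (sum_mi_axis_restrict N (i0 := i0)
    (Phi := fun al => (opnorm ip (a al) + opnorm ip (b al)) * cmono (axis_embed w) al)); last first.
    move=> al hal; rewrite /cmono (prod_exprn_off_axis (i0 := i0)) ?mulr0 //.
    by move=> i /axis_embed_off ->; rewrite cmod0.
  apply: ler_sum => be _.
  by rewrite cmono_ord1 /cmono prod_exprn_mi_axis axis_embed_i0.
split.
  move=> w x hw e he; have [N0 hN0] := conv _ x (axis_embed_ball hw) e he.
  exists N0 => N hN; suff -> : psum (restrict_coef a) (restrict_coef c) w x N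
    = psum a c (axis_embed w) x N by exact: hN0.
  rewrite /psum (sum_mi_axis_restrict N (i0 := i0) (Phi := fun al =>
    mono (axis_embed w) al *: a al x + mono (fun i => conjc (axis_embed w i)) al *: c al x));
    last first.
    move=> al hal; rewrite /mono !(prod_exprn_off_axis (i0 := i0)) ?scale0r ?addr0 //.
    - exact: conj_off.
    - by move=> i /axis_embed_off.
  apply: eq_bigr => be _; rewrite !mono_ord1 /mono !prod_exprn_mi_axis.
  by rewrite axis_embed_i0.
by exists M => w x hw; exact: boundF (axis_embed_ball hw).
Qed.

Lemma AP_cond_axis (Y : lmodType C) (ny : Y -> R) (U : (H -> H) -> Y) (p lam r1 r0 : R) :
  0 < p -> R_cond ip ny U p lam (@unit_disc R) r1 -> scale_dom r1 (@unit_disc R) (fun=> r0%:C) ->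
  0 <= r0 -> AP_cond ip ny U p lam (ball_Z nz) (fun i => if i == i0 then r0 else 0).
Proof.
move=> p0 hR hr0 r00 a b c F hF N.
have [M boundF] : exists M, forall z x, ball_Z nz z -> hnorm ip (F z x) <= M * hnorm ip x.
  by case: hF => [_ [_ [_ [_ [_ hb]]]]].
apply: le_trans _ (fnorm_comp_powR_le hH lam p0 _ (@axis_embed_ball) boundF); last first.
  by exists (fun=> 0); exact: unit_disc0.
apply: le_trans (hR _ _ _ _ (pluri_bdd_restrict hF) _ hr0 N).
rewrite (sum_mi_axis_restrict N (i0 := i0) (Phi := fun al =>
   (ny (U (a al)) `^ p + ny (U (b al)) `^ p) *
     rpow_mono (fun i => if i == i0 then r0 else 0) p al)); last first.
  move=> al hal; rewrite /rpow_mono (prod_off_axis (i0 := i0) (F := fun i k =>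
    (if i == i0 then r0 else 0) `^ (p * k%:R))) ?mulr0 // => i k hi hk.
  by rewrite (negPf hi) powR0 // mulf_neq0 ?gt_eqF // ltr0n lt0n.
apply: ler_sum => be _; rewrite /rpow_mono (@prod_mi_axis _ _ i0 (fun i k =>
    (if i == i0 then r0 else 0) `^ (p * k%:R))) ?eqxx => [|i]; last first.
  by rewrite mulr0 powRr0.
by rewrite cmono_ord1 cmodR ger0_norm // -powR_mulrn // -powRrM [_ * p]mulrC.
Qed.

End Restriction.

Lemma scale_dom_unit_disc (R : realType) (r1 r0 : R) : 0 <= r0 -> (r0 < r1 \/ r0 = 0) ->
  scale_dom r1 (@unit_disc R) (fun=> r0%:C).
Proof.
move=> r00 [lt|->]; last first.
  by exists (fun=> 0); [exact: unit_disc0 | apply: funext => i; rewrite mulr0].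
have r1_gt0 : 0 < r1 by apply: le_lt_trans lt.
exists (fun=> (r0 / r1)%:C).
  change (cmod ((r0 / r1)%:C) < 1); rewrite cmodR ger0_norm ?divr_ge0 ?(ltW r1_gt0) //.
  by rewrite ltr_pdivrMr // mul1r.
by apply: funext => i; rewrite -rmorphM /= mulrC divfK // gt_eqF.
Qed.

Lemma scale_dom_cmod_le (R : realType) (r : R) (w : 'I_1 -> R[i]) : 0 <= r ->
  scale_dom r (@unit_disc R) w -> cmod (w ord0) <= r.
Proof.
move=> r0 [u hu <-]; rewrite cmodM cmodR ger0_norm // -[leRHS]mulr1.
by rewrite ler_wpM2l // ltW.
Qed.

Section Lift.
Variable R : realType.
Local Notation C := (R[i]).
Variables (n : nat) (nz : ('I_n -> C) -> R).
Hypotheses (hnz : unc_norm nz) (n_gt0 : (0 < n)%N).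
Local Notation M := (id_to_l1 nz).

Definition sum_coords (z : 'I_n -> C) : 'I_1 -> C := fun=> (M^-1)%:C * \sum_(i < n) z i.

Definition lift_weight (al : {ffun 'I_n -> nat}) : R := (mcoef al)%:R * M^-1 ^+ mdeg al.

Lemma id_to_l1_gt0 : 0 < M.
Proof. exact: lt_le_trans ltr01 (id_to_l1_ge1 hnz n_gt0). Qed.

Lemma lift_weight_ge0 al : 0 <= lift_weight al.
Proof. by rewrite mulr_ge0 // exprn_ge0 // invr_ge0 ltW // id_to_l1_gt0. Qed.

Lemma sum_cmod_disc z : ball_Z nz z ->
  unit_disc (fun _ : 'I_1 => (M^-1 * \sum_(i < n) cmod (z i))%:C).
Proof.
move=> hz; change (cmod ((M^-1 * \sum_(i < n) cmod (z i))%:C) < 1).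
rewrite cmodR ger0_norm ?mulr_ge0 ?invr_ge0 ?sumr_ge0 ?(ltW id_to_l1_gt0) //; last first.
  by move=> i _; exact: cmod_ge0.
by rewrite mulrC ltr_pdivrMr ?id_to_l1_gt0 // mul1r sum_cmod_lt_id_to_l1.
Qed.

Lemma sum_coords_disc z : ball_Z nz z -> unit_disc (sum_coords z).
Proof.
move=> hz; have := sum_cmod_disc hz.
change (cmod ((M^-1 * \sum_(i < n) cmod (z i))%:C) < 1 ->
  cmod ((M^-1)%:C * \sum_(i < n) z i) < 1).
apply: le_lt_trans; rewrite cmodM !cmodR.
rewrite ger0_norm ?invr_ge0 ?(ltW id_to_l1_gt0) // ger0_norm; last first.
  by rewrite mulr_ge0 ?invr_ge0 ?(ltW id_to_l1_gt0) // sumr_ge0 // => i _; exact: cmod_ge0.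
by rewrite ler_wpM2l ?invr_ge0 ?(ltW id_to_l1_gt0) // cmod_sum.
Qed.

Variables (H : lmodType C) (ip : H -> H -> C).
Hypothesis hH : is_hilbert ip.

Definition lift_coef (a : {ffun 'I_1 -> nat} -> H -> H) (al : {ffun 'I_n -> nat}) : H -> H :=
  fun x => (lift_weight al)%:C *: a (mi1 (mdeg al)) x.

Lemma psum_lift (a c : {ffun 'I_1 -> nat} -> H -> H) z x N :
  psum (lift_coef a) (lift_coef c) z x N = psum a c (sum_coords z) x N.
Proof.
have expand (y : 'I_n -> C) (f : {ffun 'I_1 -> nat} -> H -> H) :
  \sum_(be : {ffun 'I_n -> 'I_N} | (mdeg (mi be) < N)%N) mono y (mi be) *: lift_coef f (mi be) x
  = \sum_(j < N) ((M^-1)%:C * \sum_(i < n) y i) ^+ j *: f (mi1 j) x.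
  rewrite -(sum_mi_multinomial N (M^-1)%:C y (fun j => f (mi1 j) x)).
  apply: eq_bigr => be _; rewrite /lift_coef scalerA /lift_weight mulrC.
  by rewrite rmorphM rmorph_nat rmorphXn.
rewrite /psum big_split [RHS]big_split /= !expand.
rewrite (sum_mi1 N (fun al => mono (sum_coords z) al *: a al x)).
rewrite (sum_mi1 N (fun al => mono (fun i => conjc (sum_coords z i)) al *: c al x)).
congr (_ + _); apply: eq_bigr => j _; rewrite mono_ord1 ffunE //.
by rewrite /sum_coords rmorphM rmorph_sum /= oppr0.
Qed.

Lemma lift_abs_sum_le (a b : {ffun 'I_1 -> nat} -> H -> H) z N :
  (forall al, BH ip (a al) /\ BH ip (b al)) ->
  \sum_(be : {ffun 'I_n -> 'I_N} | (mdeg (mi be) < N)%N)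
     ((opnorm ip (lift_coef a (mi be)) + opnorm ip (lift_coef b (mi be))) * cmono z (mi be))
  <= \sum_(be : {ffun 'I_1 -> 'I_N} | (mdeg (mi be) < N)%N)
     ((opnorm ip (a (mi be)) + opnorm ip (b (mi be))) *
        cmono (fun _ : 'I_1 => (M^-1 * \sum_(i < n) cmod (z i))%:C) (mi be)).
Proof.
move=> coefBH; have w0 : 0 <= M^-1 * \sum_(i < n) cmod (z i).
  by rewrite mulr_ge0 ?invr_ge0 ?(ltW id_to_l1_gt0) // sumr_ge0 // => i _; exact: cmod_ge0.
rewrite (sum_mi1 N (fun al => (opnorm ip (a al) + opnorm ip (b al)) *
  cmono (fun _ : 'I_1 => (M^-1 * \sum_(i < n) cmod (z i))%:C) al)).
under [X in _ <= X]eq_bigr do rewrite cmono_ord1 ffunE cmodR ger0_norm // mulrC.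
rewrite -(sum_mi_multinomial_mul N M^-1 (fun i => cmod (z i))
  (fun j => opnorm ip (a (mi1 j)) + opnorm ip (b (mi1 j)))).
apply: ler_sum => be _; have [ha hb] := coefBH (mi1 (mdeg (mi be))).
rewrite -/(cmono z (mi be)) mulrAC -/(lift_weight (mi be)) ler_wpM2r ?cmono_ge0 // mulrDr.
by rewrite lerD // opnormZ_le // lift_weight_ge0.
Qed.

Lemma pluri_bdd_lift a b c G : pluri_bdd ip (@unit_disc R) a b c G ->
  pluri_bdd ip (ball_Z nz) (lift_coef a) (lift_coef b) (lift_coef c)
    (fun z => G (sum_coords z)).
Proof.
move=> [coefBH [b0 [adj [abs_conv [conv [Mg boundG]]]]]].
split; first by move=> al; have [ha hb] := coefBH (mi1 (mdeg al)); split; apply: BH_scale.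
split.
  have mdeg0 : mdeg ([ffun=> 0%N] : {ffun 'I_n -> nat}) = 0%N.
    by rewrite /mdeg big1 // => i _; rewrite ffunE.
  by apply: funext => x; rewrite /lift_coef mdeg0 /mi1 b0 scaler0.
split.
  by move=> al x y; rewrite /lift_coef (ip_scalel hH) adj (ip_scaler hH) conjc_real.
split.
  move=> z hz; have [Ma hMa] := abs_conv _ (sum_cmod_disc hz).
  by exists Ma => N; apply: le_trans (lift_abs_sum_le z N coefBH) (hMa N).
split.
  move=> z x hz e he; have [N0 hN0] := conv _ x (sum_coords_disc hz) e he.
  by exists N0 => N hN; rewrite psum_lift; exact: hN0.
by exists Mg => z x hz; exact: boundG (sum_coords_disc hz).
Qed.

End Lift.

Section LiftCoefficients.
Variable R : realType.
Local Notation C := (R[i]).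
Variables (n : nat) (nz : ('I_n -> C) -> R).
Hypotheses (hnz : unc_norm nz) (n_gt0 : (0 < n)%N).
Local Notation M := (id_to_l1 nz).
Variables (H : lmodType C) (ip : H -> H -> C) (Y : lmodType C) (ny : Y -> R) (U : (H -> H) -> Y).
Hypotheses (hH : is_hilbert ip) (hY : is_banach ny) (hU : Ulinear ip U).
Variable p : R.
Hypothesis p_ge1 : 1 <= p.

(* [mcoef al <= mcoef al `^ p] because [mcoef al] is a natural number and [1 <= p]. *)
Lemma lift_AP_sum_ge (a b : {ffun 'I_1 -> nat} -> H -> H) (r : 'I_n -> R) N :
  (forall al, BH ip (a al) /\ BH ip (b al)) -> (forall i, 0 <= r i) ->
  \sum_(j < N) (M^-1 `^ p * \sum_(i < n) r i `^ p) ^+ j *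
     (ny (U (a (mi1 j))) `^ p + ny (U (b (mi1 j))) `^ p)
  <= \sum_(be : {ffun 'I_n -> 'I_N} | (mdeg (mi be) < N)%N)
     ((ny (U (lift_coef nz a (mi be))) `^ p + ny (U (lift_coef nz b (mi be))) `^ p)
        * rpow_mono r p (mi be)).
Proof.
move=> coefBH r0; have Mi0 : 0 <= M^-1 by rewrite invr_ge0 ltW // id_to_l1_gt0.
rewrite -(sum_mi_multinomial_mul N (M^-1 `^ p) (fun i => r i `^ p)
  (fun j => ny (U (a (mi1 j))) `^ p + ny (U (b (mi1 j))) `^ p)).
apply: ler_sum => be _; have [ha hb] := coefBH (mi1 (mdeg (mi be))).
rewrite /lift_coef !(UlinearZ hH hU) // !(nyZ_nneg hY) ?lift_weight_ge0 //.
rewrite !(powRM p (lift_weight_ge0 hnz n_gt0 _) (ny_ge0 hY _)) -mulrDr [leRHS]mulrAC.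
rewrite ler_wpM2r ?addr_ge0 ?powR_ge0 //.
have -> : rpow_mono r p (mi be) = \prod_(i < n) (r i `^ p) ^+ mi be i.
  by apply: eq_bigr => i _; rewrite powRrM powR_mulrn ?powR_ge0.
rewrite /lift_weight powRM ?exprn_ge0 // powR_exprnC // ler_wpM2r ?ler_wpM2r //.
- by rewrite prodr_ge0 // => i _; rewrite exprn_ge0 ?powR_ge0.
- by rewrite exprn_ge0 ?powR_ge0.
- exact: natr_le_powR.
Qed.

Lemma R_cond_of_AP_cond lam (r : 'I_n -> R) : (forall i, 0 <= r i) ->
  AP_cond ip ny U p lam (ball_Z nz) r ->
  R_cond ip ny U p lam (@unit_disc R)
    (M^-1 * (n%:R `^ p^-1 * ((n%:R)^-1 * \sum_(i < n) r i))).
Proof.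
move=> r0 hAP a b c G hG w hw N.
have p0 : 0 < p by apply: lt_le_trans p_ge1.
have Mi0 : 0 <= M^-1 by rewrite invr_ge0 ltW // id_to_l1_gt0.
have [coefBH [_ [_ [_ [_ [Mg boundG]]]]]] := hG.
have coords_disc z : ball_Z nz z -> unit_disc (sum_coords nz z) by exact: sum_coords_disc.
apply: le_trans _ (fnorm_comp_powR_le hH lam p0 _ coords_disc boundG); last first.
  by exists (fun=> 0); rewrite /ball_Z /= unc_norm0.
apply: le_trans (hAP _ _ _ _ (pluri_bdd_lift hnz n_gt0 hH hG) N).
apply: le_trans (lift_AP_sum_ge N coefBH r0).
rewrite (sum_mi1 N (fun al =>
  (ny (U (a al)) `^ p + ny (U (b al)) `^ p) * cmono w al `^ p)).
apply: ler_sum => j _; rewrite mulrC ler_wpM2r ?addr_ge0 ?powR_ge0 //.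
have rho0 : 0 <= M^-1 * (n%:R `^ p^-1 * ((n%:R)^-1 * \sum_(i < n) r i)).
  by rewrite mulr_ge0 // mulr_ge0 ?powR_ge0 // mulr_ge0 ?invr_ge0 // sumr_ge0.
rewrite cmono_ord1 ffunE powR_exprnC ?cmod_ge0 //; apply: lerXn2r.
- by rewrite nnegrE powR_ge0.
- by rewrite nnegrE mulr_ge0 ?powR_ge0 ?sumr_ge0 // => i _; rewrite powR_ge0.
apply: le_trans (scaled_mean_powR_le p_ge1 Mi0 r0).
by rewrite ge0_ler_powR ?nnegrE ?cmod_ge0 ?(ltW p0) ?(scale_dom_cmod_le rho0 hw).
Qed.

End LiftCoefficients.

Local Open Scope ereal_scope.

Lemma EFin_le_of_lt (R : realType) (x : R) (A : \bar R) : 0 <= A ->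
  (forall y : R, (0 <= y < x)%R -> y%:E <= A) -> x%:E <= A.
Proof.
case: A => [a||] //= a0 ub; rewrite ?leey // lee_fin; apply/ler_ltP => y yx.
have [y0|y_lt0] := leP 0%R y; first by rewrite -lee_fin ub ?y0.
by rewrite (le_trans (ltW y_lt0)) // -lee_fin.
Qed.

Section MainInequalities.
Variable R : realType.
Local Notation C := (R[i]).
Variables (H : lmodType C) (ip : H -> H -> C) (Y : lmodType C) (ny : Y -> R) (U : (H -> H) -> Y).
Variables (lam p : R) (n : nat) (nz : ('I_n -> C) -> R).
Hypotheses (hH : is_hilbert ip) (hY : is_banach ny) (hU : Ulinear ip U).
Hypotheses (p_ge1 : (1 <= p)%R) (n_gt0 : (0 < n)%N) (hnz : unc_norm nz).

Lemma R_lambda_le_AP_lambda :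
  ((n%:R)^-1)%:E * R_lambda ip ny U p lam (@unit_disc R)
    <= AP_lambda ip ny U p lam (ball_Z nz).
Proof.
have p0 : (0 < p)%R by apply: lt_le_trans p_ge1.
have n0 : (0 < n%:R :> R)%R by rewrite ltr0n.
pose i0 : 'I_n := Ordinal n_gt0.
have axis_point r1 r0 : R_cond ip ny U p lam (@unit_disc R) r1 -> (0 <= r0)%R ->
    (r0 < r1 \/ r0 = 0)%R -> ((n%:R)^-1 * r0)%:E <= AP_lambda ip ny U p lam (ball_Z nz).
  move=> hr1 r00 hr; apply: ereal_sup_ubound; exists (fun i => if i == i0 then r0 else 0%R).
    split; first by move=> i; case: (i == i0).
    exact (AP_cond_axis i0 hnz hH p0 hr1 (scale_dom_unit_disc r00 hr) r00).
  by rewrite (bigD1 i0) //= big1 ?addr0 // => i /negPf ->.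
rewrite /R_lambda -ereal_sup_pZl ?invr_gt0 //; apply/ereal_supP => _ [_ [r1 [r10 hr1] <-] <-].
have AP0 := axis_point _ 0%R hr1 (lexx _) (or_intror erefl); rewrite mulr0 in AP0.
apply: EFin_le_of_lt AP0 _ => y /andP [y0 y_lt].
rewrite -[y](mulKf (lt0r_neq0 n0)); apply: axis_point hr1 _ _.
- by rewrite mulr_ge0 ?ler0n.
- by left; rewrite -(ltr_pM2l n0) mulrA mulfV ?gt_eqF // mul1r in y_lt.
Qed.

Lemma AP_lambda_le_R_lambda :
  AP_lambda ip ny U p lam (ball_Z nz)
    <= (id_to_l1 nz)%:E * ((n%:R `^ p^-1)^-1)%:E * R_lambda ip ny U p lam (@unit_disc R).
Proof.
have M0 : (0 < id_to_l1 nz)%R by exact: id_to_l1_gt0.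
have np0 : (0 < n%:R `^ p^-1)%R by rewrite powR_gt0 // ltr0n.
apply/ereal_supP => _ [r [r0 hr] <-].
have := R_cond_of_AP_cond hnz n_gt0 hH hY hU p_ge1 r0 hr.
set rho := (_ * _)%R => hR.
have rho0 : (0 <= rho)%R.
  by rewrite /rho !mulr_ge0 ?invr_ge0 ?sumr_ge0 ?ler0n ?(ltW M0) ?(ltW np0).
have -> : ((n%:R)^-1 * \sum_(i < n) r i)%R = (id_to_l1 nz * (n%:R `^ p^-1)^-1 * rho)%R.
  by rewrite /rho; field; rewrite !gt_eqF // ltr0n.
rewrite EFinM lee_wpmul2l ?lee_fin ?mulr_ge0 ?invr_ge0 ?(ltW M0) ?(ltW np0) //.
by apply: ereal_sup_ubound; exists rho.
Qed.

End MainInequalities.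

Theorem mainTheorem13 (R : realType)
    (H : lmodType R[i]) (ip : H -> H -> R[i])
    (Y : lmodType R[i]) (ny : Y -> R)
    (U : (H -> H) -> Y) (lam p : R) (n : nat) (nz : ('I_n -> R[i]) -> R) :
  is_hilbert ip -> is_banach ny ->
  Ulinear ip U -> Ubounded ip ny U -> Unonnull ip U ->
  (Unorm ip ny U < lam)%R ->
  (1 <= p)%R ->
  (0 < n)%N -> unc_norm nz ->
  ((n%:R)^-1)%:E * R_lambda ip ny U p lam (@unit_disc R)
    <= AP_lambda ip ny U p lam (ball_Z nz)
  /\ AP_lambda ip ny U p lam (ball_Z nz)
    <= (id_to_l1 nz)%:E * ((n%:R `^ p^-1)^-1)%:E * R_lambda ip ny U p lam (@unit_disc R).
Proof.
move=> hH hY hU _ _ _ p_ge1 n_gt0 hnz; split.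
- exact: R_lambda_le_AP_lambda.
- exact: AP_lambda_le_R_lambda.
Qed.
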